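(* For every integer $i > 0$, the limit defining $d(W,\sigma^iW)$ exists if and only if the limit defining $d_0(W,\sigma^iW)$ exists, and in that case $$d(W,\sigma^i W) = \tfrac{4}{3}\, d_0(W,\sigma^i W).$$
   Context: Words are finite strings over $\{0,1\}$; $\alpha(i)$ is the $i$-th letter and $|\alpha|$ the length. Define $W_0 = 0$, $W_{m+1} = W_m W_m 1 W_m$, and let $W=W(0)W(1)\cdots$ (indexed from $0$) be the unique infinite word having every $W_m$ as an initial segment. For words $\alpha,\beta$ of equal length, the Hamming distance is $d(\alpha,\beta) = |\{i:\alpha(i)\ne\beta(i)\}|/|\alpha|$, and (if $\alpha$ contains a $0$) $d_0(\alpha,\beta) = |\{i : \alpha(i)=0,\ \beta(i)=1\}|/|\{i:\alpha(i)=0\}|$. For $i>0$ and $n\ge0$ let $\alpha_n = W(i)W(i+1)\cdots W(i+|W_n|-1)$ be the subword of $W$ of length $|W_n|$ starting at position $i$, and define $d(W,\sigma^iW) = \lim_{n\to\infty} d(W_n,\alpha_n)$ and $d_0(W,\sigma^iW) = \lim_{n\to\infty} d_0(W_n,\alpha_n)$. *)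

From Stdlib Require Import Reals Lra Lia Arith List.
Import ListNotations.
Open Scope R_scope.

(* Words over {0,1} are lists of nat (letters 0 and 1). *)
Fixpoint Wm (m : nat) : list nat :=
  match m with
  | O => [0%nat]
  | S k => Wm k ++ Wm k ++ [1%nat] ++ Wm k
  end.

(* The infinite word W, indexed from 0: W(k) is the k-th letter of W_k
   (|W_k| > k, and each W_m is a prefix of W_{m+1}, so W has every W_m
   as initial segment). *)
Definition W (k : nat) : nat := nth k (Wm k) 0%nat.

Definition ham_count (a b : list nat) : nat :=
  length (filter (fun p => negb (Nat.eqb (fst p) (snd p))) (combine a b)).

Definition dist (a b : list nat) : R := INR (ham_count a b) / INR (length a).

Definition zeros (a : list nat) : nat := length (filter (fun x => Nat.eqb x 0) a).

Definition d0_count (a b : list nat) : nat :=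
  length (filter (fun p => andb (Nat.eqb (fst p) 0) (Nat.eqb (snd p) 1)) (combine a b)).

Definition dist0 (a b : list nat) : R := INR (d0_count a b) / INR (zeros a).

Definition alpha (i n : nat) : list nat :=
  map (fun k => W (i + k)) (seq 0 (length (Wm n))).

Definition dseq (i : nat) (n : nat) : R := dist (Wm n) (alpha i n).
Definition d0seq (i : nat) (n : nat) : R := dist0 (Wm n) (alpha i n).

(* Counting mismatches of two binary words letter pair by letter pair gives
   ham = 2 * #{0 over 1} + #1(W_n) - #1(alpha_n), and the window alpha_n of W
   shifted by i has at most i more or fewer 1s than W_n.  Since W_n has
   (2 |W_n| + 1) / 3 zeros, it follows that
   |d(W_n, alpha_n) - 4/3 d_0(W_n, alpha_n)| <= (i + 1) / |W_n| <= (i + 1) / (n + 1),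
   so the two sequences converge together and their limits are in ratio 4/3. *)

From Stdlib Require Import Reals Ratan Lra Lia List.
Import ListNotations.
Open Scope R_scope.

Definition ones (a : list nat) : nat := length (filter (fun x => Nat.eqb x 1) a).

Lemma ones_app (a b : list nat) : ones (a ++ b) = (ones a + ones b)%nat.
Proof. unfold ones. now rewrite filter_app, length_app. Qed.

Lemma ones_le_length (a : list nat) : (ones a <= length a)%nat.
Proof. apply filter_length_le. Qed.

Lemma ham_count_ones (a b : list nat) :
  length a = length b ->
  Forall (fun x => x <= 1)%nat a -> Forall (fun x => x <= 1)%nat b ->
  (ham_count a b + ones b = 2 * d0_count a b + ones a)%nat.
Proof.
  revert b; induction a as [|x a IH]; intros [|y b] Hlen Ha Hb; simpl in *; try lia.
  inversion Ha as [|? ? Hx Ha']; inversion Hb as [|? ? Hy Hb']; subst.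
  specialize (IH b ltac:(lia) Ha' Hb').
  unfold ham_count, d0_count, ones in *; simpl.
  destruct x as [|[|x]]; destruct y as [|[|y]]; simpl; lia.
Qed.

Lemma d0_count_le_zeros (a b : list nat) : (d0_count a b <= zeros a)%nat.
Proof.
  revert b; induction a as [|x a IH]; intros [|y b]; unfold d0_count, zeros in *;
    simpl; try lia.
  specialize (IH b). destruct (Nat.eqb x 0), (Nat.eqb y 1); simpl; lia.
Qed.

Lemma ones_window_shift (f : nat -> nat) (i L : nat) :
  (ones (map f (seq i L)) <= ones (map f (seq 0 L)) + i)%nat /\
  (ones (map f (seq 0 L)) <= ones (map f (seq i L)) + i)%nat.
Proof.
  assert (Hsplit : seq 0 L ++ seq L i = seq 0 i ++ seq i L).
  { rewrite <- !seq_app. f_equal. lia. }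
  apply (f_equal (fun s => ones (map f s))) in Hsplit.
  rewrite !map_app, !ones_app in Hsplit.
  pose proof (ones_le_length (map f (seq 0 i))).
  pose proof (ones_le_length (map f (seq L i))).
  rewrite !length_map, !length_seq in *. lia.
Qed.

Lemma length_Wm_S (n : nat) : length (Wm (S n)) = (3 * length (Wm n) + 1)%nat.
Proof. simpl. rewrite !length_app. simpl. lia. Qed.

Lemma zeros_Wm_S (n : nat) : zeros (Wm (S n)) = (3 * zeros (Wm n))%nat.
Proof. unfold zeros. simpl. rewrite !filter_app, !length_app. simpl. lia. Qed.

Lemma zeros_Wm (n : nat) : (3 * zeros (Wm n) = 2 * length (Wm n) + 1)%nat.
Proof. induction n; [reflexivity|]. rewrite length_Wm_S, zeros_Wm_S. lia. Qed.

Lemma length_Wm_gt (n : nat) : (n < length (Wm n))%nat.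
Proof. induction n; [simpl; lia|]. rewrite length_Wm_S. lia. Qed.

Lemma Wm_binary (n : nat) : Forall (fun x => x <= 1)%nat (Wm n).
Proof.
  induction n; simpl; [now repeat constructor|].
  repeat (apply Forall_app; split); auto.
Qed.

Lemma Wm_prefix (n m : nat) : (n <= m)%nat -> exists t, Wm m = Wm n ++ t.
Proof.
  induction 1 as [|m _ [t Ht]]; [exists []; now rewrite app_nil_r|].
  simpl. rewrite Ht. eexists. now rewrite <- app_assoc.
Qed.

Lemma nth_Wm_mono (n m k : nat) :
  (n <= m)%nat -> (k < length (Wm n))%nat -> nth k (Wm m) 0%nat = nth k (Wm n) 0%nat.
Proof. intros Hnm Hk. destruct (Wm_prefix _ _ Hnm) as [t ->]. now apply app_nth1. Qed.

Lemma W_nth_Wm (n k : nat) : (k < length (Wm n))%nat -> W k = nth k (Wm n) 0%nat.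
Proof.
  intros Hk. unfold W. destruct (Nat.le_ge_cases k n) as [Hkn|Hnk].
  - symmetry. apply nth_Wm_mono; [exact Hkn | apply length_Wm_gt].
  - now apply nth_Wm_mono.
Qed.

Lemma Wm_map_W (n : nat) : Wm n = map W (seq 0 (length (Wm n))).
Proof.
  apply nth_ext with (d := 0%nat) (d' := W 0); [now rewrite length_map, length_seq|].
  intros k Hk. rewrite map_nth, seq_nth by assumption.
  symmetry. now apply W_nth_Wm.
Qed.

Lemma W_binary (k : nat) : (W k <= 1)%nat.
Proof.
  rewrite (W_nth_Wm k k) by apply length_Wm_gt.
  apply (proj1 (Forall_forall _ _) (Wm_binary k)), nth_In, length_Wm_gt.
Qed.

Lemma alpha_map_W (i n : nat) : alpha i n = map W (seq i (length (Wm n))).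
Proof.
  unfold alpha. replace (seq i _) with (seq (i + 0) (length (Wm n))) by now rewrite Nat.add_0_r.
  generalize 0%nat as s.
  induction (length (Wm n)) as [|L IH]; intros s; simpl; [reflexivity|].
  now rewrite IH, Nat.add_succ_r.
Qed.

Lemma ratio_estimate (H C L Z D : R) :
  0 < L -> 3 * Z = 2 * L + 1 -> 0 <= C <= Z -> Rabs (H - 2 * C) <= D ->
  Rabs (H / L - 4 / 3 * (C / Z)) <= (D + 1) / L.
Proof.
  intros HL HZ HC HD.
  replace (H / L - 4 / 3 * (C / Z)) with ((H - 2 * C + 2 * C / (2 * L + 1)) / L)
    by (replace Z with ((2 * L + 1) / 3) by lra; field; lra).
  assert (Hcorr : 0 <= 2 * C / (2 * L + 1) <= 1).
  { assert (2 * C / (2 * L + 1) * (2 * L + 1) = 2 * C) by (field; lra).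
    split; nra. }
  unfold Rdiv at 1. rewrite Rabs_mult, Rabs_inv, (Rabs_pos_eq L) by lra.
  apply Rmult_le_compat_r; [left; now apply Rinv_0_lt_compat|].
  eapply Rle_trans; [apply Rabs_triang|].
  rewrite (Rabs_pos_eq (2 * C / _)); lra.
Qed.

Lemma dseq_d0seq_gap (i n : nat) :
  Rabs (dseq i n - 4 / 3 * d0seq i n) <= (INR i + 1) / (INR n + 1).
Proof.
  pose proof (ones_window_shift W i (length (Wm n))) as [Hup Hdown].
  rewrite <- (alpha_map_W i n), <- Wm_map_W in Hup, Hdown.
  unfold dseq, d0seq, dist, dist0.
  set (a := Wm n) in *. set (b := alpha i n) in *.
  assert (Hlen : length a = length b) by (subst b; unfold alpha; now rewrite length_map, length_seq).
  assert (Hb : Forall (fun x => x <= 1)%nat b).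
  { rewrite Forall_forall. intros x Hx. subst b. unfold alpha in Hx.
    apply in_map_iff in Hx as [k [<- _]]. apply W_binary. }
  pose proof (ham_count_ones a b Hlen (Wm_binary n) Hb) as Hham.
  assert (HL : INR n + 1 <= INR (length a)) by (rewrite <- S_INR; apply le_INR, length_Wm_gt).
  pose proof (zeros_Wm n) as Hz. fold a in Hz. clearbody a b.
  eapply Rle_trans; [apply ratio_estimate with (D := INR i)|].
  - pose proof (pos_INR n). lra.
  - apply (f_equal INR) in Hz. rewrite plus_INR, !mult_INR in Hz. simpl in Hz. lra.
  - split; [apply pos_INR|apply le_INR, d0_count_le_zeros].
  - apply (f_equal INR) in Hham. apply le_INR in Hup, Hdown.
    rewrite !plus_INR, mult_INR in *. simpl in Hham.
    apply Rabs_le. lra.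
  - apply Rmult_le_compat_l; [pose proof (pos_INR i); lra|].
    apply Rinv_le_contravar; [pose proof (pos_INR n); lra | exact HL].
Qed.

Lemma Un_cv_const (c : R) : Un_cv (fun _ => c) c.
Proof.
  intros eps Heps. exists 0%nat. intros n _.
  unfold Rdist. rewrite Rminus_diag, Rabs_R0. exact Heps.
Qed.

Lemma Un_cv_0_of_bound (w : nat -> R) (K : R) :
  (forall n, Rabs (w n) <= K / (INR n + 1)) -> Un_cv w 0.
Proof.
  intros Hw eps Heps.
  destruct (INR_archimed eps K Heps) as [N HN].
  exists N. intros n Hn. unfold Rdist. rewrite Rminus_0_r.
  apply Rle_lt_trans with (1 := Hw n).
  apply le_INR in Hn. pose proof (pos_INR N).
  apply Rmult_lt_reg_r with (INR n + 1); [lra|].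
  unfold Rdiv. rewrite Rmult_assoc, Rinv_l by lra. nra.
Qed.

Lemma Un_cv_scal_of_gap (u v : nat -> R) (c l : R) :
  Un_cv (fun n => u n - c * v n) 0 -> Un_cv v l -> Un_cv u (c * l).
Proof.
  intros Hgap Hv.
  apply Un_cv_ext with (fun n => (u n - c * v n) + c * v n); [intros; ring|].
  rewrite <- (Rplus_0_l (c * l)).
  apply CV_plus; [exact Hgap|]. apply CV_mult; [apply Un_cv_const | exact Hv].
Qed.

Lemma Un_cv_gap_sym (u v : nat -> R) (c : R) :
  c <> 0 -> Un_cv (fun n => u n - c * v n) 0 -> Un_cv (fun n => v n - / c * u n) 0.
Proof.
  intros Hc Hgap.
  apply Un_cv_ext with (fun n => - / c * (u n - c * v n)); [intros; field; exact Hc|].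
  rewrite <- (Rmult_0_r (- / c)).
  apply CV_mult; [apply Un_cv_const | exact Hgap].
Qed.

Theorem lemma3 (i : nat) (hi : (0 < i)%nat) :
  ((exists l, Un_cv (dseq i) l) <-> (exists l0, Un_cv (d0seq i) l0)) /\
  (forall l l0, Un_cv (dseq i) l -> Un_cv (d0seq i) l0 -> l = 4 / 3 * l0).
Proof.
  pose proof (Un_cv_0_of_bound _ _ (dseq_d0seq_gap i)) as Hgap.
  split; [split|].
  - intros [l Hl]. exists (/ (4 / 3) * l).
    apply (Un_cv_scal_of_gap _ (dseq i)); [|exact Hl].
    apply Un_cv_gap_sym; [lra | exact Hgap].
  - intros [l0 Hl0]. exists (4 / 3 * l0).
    exact (Un_cv_scal_of_gap _ _ _ _ Hgap Hl0).
  - intros l l0 Hl Hl0.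
    exact (UL_sequence (dseq i) _ _ Hl (Un_cv_scal_of_gap _ _ _ _ Hgap Hl0)).
Qed.
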